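(* Let $(X,\sigma_X)$, $(Y,\sigma_Y)$ be one-sided full shifts and $\pi:X\to Y$ a one-block factor map. Let $f\in Bow(X)$, $\mu_f$ its unique invariant Gibbs measure, $f_n(x)=e^{f(x)+\cdots+f(\sigma_X^{n-1}x)}$, and $\bar g_n(y)=\sup_{E_n(y)}\sum_{x\in E_n(y)}f_n(x)$. Suppose there exists $A>0$ such that $$\frac1A\le\frac{\bar g_n(y)}{|\pi^{-1}[y_1\cdots y_n]|\,f_n(x)}\le A$$ for all $n$, $y\in Y$, and all $x\in[x_1\cdots x_n]$ with $\pi([x_1\cdots x_n])\subseteq[y_1\cdots y_n]$. Then $\nu=\pi\mu_f$ is the unique invariant Gibbs measure for a continuous function on $Y$ belonging to $Bow(Y)$.
   Context: Full shift: $\{1,\dots,k\}^{\mathbb N}$ with left shift. One-block factor map: continuous surjection commuting with shifts, $\pi(x)_i$ depending only on $x_i$. $Bow(Z)=\{f\in C(Z):\sup_n\sup\{S_nf(z)-S_nf(z'):z_i=z'_i,1\le i\le n\}<\infty\}$, $S_nf=\sum_{i=0}^{n-1}f\circ\sigma^i$; such $f$ has a unique invariant Gibbs measure ($\mu$ invariant with $C_0^{-1}<\mu([z_1\cdots z_n])/e^{-nP(f)+S_nf(z)}<C_0$ for all $z,n$). $E_n(y)$: any set with exactly one point from each cylinder $[x_1\cdots x_n]$ of $X$ with $\pi([x_1\cdots x_n])\subseteq[y_1\cdots y_n]$; the sup is over all such choices. $|\pi^{-1}[y_1\cdots y_n]|$ is the number of such cylinders. *)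

From Stdlib Require Import Reals List Arith.
Import ListNotations.
Open Scope R_scope.

(* Alphabet {0,...,k-1} (paper: {1,...,k}); points of the full shift are
   sequences nat -> nat with all letters < k; coordinates are 0-based. *)
Definition point := nat -> nat.
Definition inX (k : nat) (x : point) : Prop := forall i, (x i < k)%nat.

Definition shiftn (i : nat) (x : point) : point := fun j => x (i + j)%nat.

Definition agree (n : nat) (x z : point) : Prop := forall i, (i < n)%nat -> x i = z i.

Fixpoint Rsum (l : list R) : R :=
  match l with [] => 0 | a :: t => a + Rsum t end.

Definition Sn (f : point -> R) (n : nat) (x : point) : R :=
  Rsum (map (fun i => f (shiftn i x)) (seq 0 n)).

Definition continuous_on_shift (k : nat) (f : point -> R) : Prop :=
  forall x, inX k x -> forall eps, 0 < eps ->
    exists m, forall z, inX k z -> agree m x z -> Rabs (f z - f x) < eps.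

Definition Bow (k : nat) (f : point -> R) : Prop :=
  exists C, forall n z z', inX k z -> inX k z' -> agree n z z' ->
    Sn f n z - Sn f n z' <= C.

Definition valid_word (k : nat) (w : list nat) : Prop := Forall (fun a => (a < k)%nat) w.

Fixpoint words (k n : nat) : list (list nat) :=
  match n with
  | O => [[]]
  | S n' => flat_map (fun w => map (fun a => w ++ [a]) (seq 0 k)) (words k n')
  end.

Definition prefix (x : point) (n : nat) : list nat := map x (seq 0 n).

(* A Borel probability measure on the full shift, given by its (Kolmogorov-
   consistent) values on cylinders: m w = mu([w]). *)
Definition inv_prob (k : nat) (m : list nat -> R) : Prop :=
  (forall w, valid_word k w -> 0 <= m w) /\
  m [] = 1 /\
  (forall w, valid_word k w -> m w = Rsum (map (fun a => m (w ++ [a])) (seq 0 k))) /\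
  (* shift invariance: mu(sigma^{-1}[w]) = mu([w]) *)
  (forall w, valid_word k w -> m w = Rsum (map (fun a => m (a :: w)) (seq 0 k))).

(* Gibbs property for f (P plays the role of the pressure P(f), which is
   forced by the Gibbs inequalities) *)
Definition Gibbs (k : nat) (f : point -> R) (m : list nat -> R) : Prop :=
  exists P C0, 0 < C0 /\
    forall z n, inX k z -> (1 <= n)%nat ->
      / C0 < m (prefix z n) / exp (- INR n * P + Sn f n z) < C0.

Definition same_measure (k : nat) (m1 m2 : list nat -> R) : Prop :=
  forall w, valid_word k w -> m1 w = m2 w.

Definition pimap (p : nat -> nat) (x : point) : point := fun i => p (x i).

Definition pushforward (k : nat) (p : nat -> nat) (m : list nat -> R) (v : list nat) : R :=
  Rsum (map m (filter (fun w => if list_eq_dec Nat.eq_dec (map p w) v then true else false) (words k (length v)))).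

Definition preimage_words (k : nat) (p : nat -> nat) (y : point) (n : nat) : list (list nat) :=
  filter (fun w => if list_eq_dec Nat.eq_dec (map p w) (prefix y n) then true else false) (words k n).

Definition fn (f : point -> R) (n : nat) (x : point) : R := exp (Sn f n x).

(* values sum_{x in E_n(y)} f_n(x): E_n(y) is given by a choice c w in [w]
   for each cylinder [w] with pi([w]) ⊆ [y_0..y_{n-1}] *)
Definition En_sums (k : nat) (p : nat -> nat) (f : point -> R) (n : nat) (y : point) (s : R) : Prop :=
  exists c : list nat -> point,
    (forall w, In w (preimage_words k p y n) ->
       inX k (c w) /\ forall i, (i < n)%nat -> c w i = nth i w 0%nat) /\
    s = Rsum (map (fun w => fn f n (c w)) (preimage_words k p y n)).

From Stdlib Require Import Reals List Arith Lia Lra FunctionalExtensionality.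
Import ListNotations.
Open Scope R_scope.

(** Write [s] for the one-block section of [π] that sends a letter [b] of [Y] to the
  least letter of [X] above it, and put
      g(y) = f(s y) + log #π⁻¹(y_0).
  Since π⁻¹[y_0 … y_{n-1}] is a product of fibres, S_n g(y) = S_n f(s y) + log N_n(y)
  with N_n(y) = |π⁻¹[y_0 … y_{n-1}]|.  The ratio hypothesis (applied twice, at [s y]
  and at a point of a preimage cylinder [w]) makes f_n constant up to the factor A²
  on the preimage cylinders, so by the Gibbs property of μ each of the N_n(y) of them
  has μ-mass ≍ e^{-nP} f_n(s y); summing, ν[y_0 … y_{n-1}] ≍ e^{-nP + S_n g(y)}.
  Continuity and the Bowen property pass from f to g because log #π⁻¹(y_0) depends
  on one coordinate only.  Uniqueness is a general fact proved first: two invariant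
  Gibbs measures m1, m2 for the same potential on a full shift have the same pressure,
  hence m1 ≤ D m2 and m2 is quasi-multiplicative; a variance argument on
  V_n = Σ_{|w|=n} m1[w]²/m2[w] then gives V_n ≤ 1, which forces m1 = m2. *)

Definition indR (b : bool) : R := if b then 1 else 0.

Lemma indR_nonneg b : 0 <= indR b.
Proof. destruct b; unfold indR; lra. Qed.

Lemma Rsum_app l1 l2 : Rsum (l1 ++ l2) = Rsum l1 + Rsum l2.
Proof. induction l1; simpl; [lra | rewrite IHl1; lra]. Qed.

Lemma Rsum_ext {A} (l : list A) F G :
  (forall x, In x l -> F x = G x) -> Rsum (map F l) = Rsum (map G l).
Proof. induction l; simpl; intros H; auto. rewrite H, IHl; auto. Qed.

Lemma Rsum_le {A} (l : list A) F G :
  (forall x, In x l -> F x <= G x) -> Rsum (map F l) <= Rsum (map G l).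
Proof.
  induction l; simpl; intros H; [lra |].
  assert (Rsum (map F l) <= Rsum (map G l)) by (apply IHl; auto).
  specialize (H a (or_introl eq_refl)). lra.
Qed.

Lemma Rsum_plus {A} (l : list A) F G :
  Rsum (map (fun x => F x + G x) l) = Rsum (map F l) + Rsum (map G l).
Proof. induction l; simpl; [lra | rewrite IHl; lra]. Qed.

Lemma Rsum_minus {A} (l : list A) F G :
  Rsum (map (fun x => F x - G x) l) = Rsum (map F l) - Rsum (map G l).
Proof. induction l; simpl; [lra | rewrite IHl; lra]. Qed.

Lemma Rsum_scal {A} (l : list A) a F :
  Rsum (map (fun x => a * F x) l) = a * Rsum (map F l).
Proof. induction l; simpl; [lra | rewrite IHl; lra]. Qed.

Lemma Rsum_zero {A} (l : list A) : Rsum (map (fun _ => 0) l) = 0.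
Proof. induction l; simpl; [lra | rewrite IHl; lra]. Qed.

Lemma Rsum_flat_map {A B} (l : list A) (g : A -> list B) F :
  Rsum (map F (flat_map g l)) = Rsum (map (fun x => Rsum (map F (g x))) l).
Proof. induction l; simpl; auto. rewrite map_app, Rsum_app, IHl; auto. Qed.

Lemma Rsum_swap {A B} (l1 : list A) (l2 : list B) F :
  Rsum (map (fun x => Rsum (map (fun y => F x y) l2)) l1) =
  Rsum (map (fun y => Rsum (map (fun x => F x y) l1)) l2).
Proof.
  induction l1; simpl; [rewrite Rsum_zero; auto |].
  rewrite IHl1, <- Rsum_plus; auto.
Qed.

Lemma Rsum_nonneg {A} (l : list A) F :
  (forall x, In x l -> 0 <= F x) -> 0 <= Rsum (map F l).
Proof. intros H. rewrite <- (Rsum_zero l). apply Rsum_le; auto. Qed.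

Lemma Rsum_ge_In {A} (l : list A) F a :
  (forall x, In x l -> 0 <= F x) -> In a l -> F a <= Rsum (map F l).
Proof.
  induction l; simpl; intros H Ha; [contradiction |].
  pose proof (Rsum_nonneg l F (fun x Hx => H x (or_intror Hx))).
  destruct Ha as [-> | Ha]; [lra |].
  specialize (IHl (fun x Hx => H x (or_intror Hx)) Ha).
  specialize (H a0 (or_introl eq_refl)). lra.
Qed.

Lemma Rsum_le_const {A} (l : list A) F c :
  (forall x, In x l -> F x <= c) -> Rsum (map F l) <= INR (length l) * c.
Proof.
  induction l; intros H; [simpl; lra |]. cbn [map Rsum length]. rewrite S_INR.
  assert (Rsum (map F l) <= INR (length l) * c) by (apply IHl; intros; apply H; simpl; auto).
  specialize (H a (or_introl eq_refl)). lra.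
Qed.

Lemma Rsum_ge_const {A} (l : list A) F c :
  (forall x, In x l -> c <= F x) -> INR (length l) * c <= Rsum (map F l).
Proof.
  induction l; intros H; [simpl; lra |]. cbn [map Rsum length]. rewrite S_INR.
  assert (INR (length l) * c <= Rsum (map F l)) by (apply IHl; intros; apply H; simpl; auto).
  specialize (H a (or_introl eq_refl)). lra.
Qed.

Lemma length_filter_indR {A} (l : list A) P :
  INR (length (filter P l)) = Rsum (map (fun x => indR (P x)) l).
Proof.
  induction l; [reflexivity |]. cbn [filter map].
  destruct (P a); cbn [length map Rsum]; rewrite <- IHl; unfold indR; [rewrite S_INR |]; lra.
Qed.

Lemma Rsum_filter {A} (l : list A) P F :
  Rsum (map F (filter P l)) = Rsum (map (fun x => indR (P x) * F x) l).
Proof. induction l; simpl; auto. destruct (P a); simpl; rewrite IHl; unfold indR; lra. Qed.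

Lemma Rsum_delta (L : list nat) c x :
  NoDup L -> In c L -> Rsum (map (fun b => indR (Nat.eqb c b) * x) L) = x.
Proof.
  induction L as [| a L IHL]; simpl; intros Hn Hc; [contradiction |]. inversion Hn; subst.
  destruct Hc as [-> | Hc].
  - rewrite Nat.eqb_refl, (Rsum_ext _ _ (fun _ => 0)), Rsum_zero; [unfold indR; lra |].
    intros y Hy. destruct (Nat.eqb_spec c y); subst; [contradiction |]. unfold indR; lra.
  - destruct (Nat.eqb_spec c a); subst; [contradiction |]. rewrite IHL; auto. unfold indR; lra.
Qed.

Lemma words_S k n :
  words k (S n) = flat_map (fun w => map (fun a => w ++ [a]) (seq 0 k)) (words k n).
Proof. reflexivity. Qed.

Lemma words_1 k : words k 1 = map (fun a => [a]) (seq 0 k).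
Proof. simpl. rewrite app_nil_r. reflexivity. Qed.

Lemma valid_app k v w : valid_word k v -> valid_word k w -> valid_word k (v ++ w).
Proof. unfold valid_word; intros; apply Forall_app; auto. Qed.

Lemma words_spec k n w : In w (words k n) <-> valid_word k w /\ length w = n.
Proof.
  revert w; induction n; intros w.
  - simpl. split; [intros [<- | []]; split; auto; constructor |].
    intros [_ H]. destruct w; [auto | discriminate].
  - rewrite words_S, in_flat_map. split.
    + intros [w' [Hw' Hin]]. apply in_map_iff in Hin. destruct Hin as [a [<- Ha]].
      apply in_seq in Ha. apply IHn in Hw'. destruct Hw' as [Hv Hl].
      split; [apply valid_app; auto; constructor; [lia | constructor] |].
      rewrite length_app; simpl; lia.
    + intros [Hv Hl]. destruct (exists_last (l := w)) as [w' [a ->]]; [intros ->; discriminate |].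
      rewrite length_app in Hl; simpl in Hl. unfold valid_word in Hv. apply Forall_app in Hv. destruct Hv as [Hv1 Hv2].
      inversion Hv2; subst. exists w'. split; [apply IHn; split; auto; lia |].
      apply in_map_iff. exists a; split; auto. apply in_seq; lia.
Qed.

Lemma in_words k n w : In w (words k n) -> valid_word k w /\ length w = n.
Proof. apply words_spec. Qed.

Lemma Rsum_words_add k j n F :
  Rsum (map F (words k (j + n))) =
  Rsum (map (fun v => Rsum (map (fun w => F (v ++ w)) (words k n))) (words k j)).
Proof.
  revert F; induction n; intros F.
  - rewrite Nat.add_0_r. apply Rsum_ext. intros v _. simpl. rewrite app_nil_r. lra.
  - rewrite <- plus_n_Sm, words_S, Rsum_flat_map, IHn. apply Rsum_ext. intros v _.
    rewrite words_S, Rsum_flat_map. apply Rsum_ext. intros w _.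
    rewrite !map_map. apply Rsum_ext. intros a _. rewrite app_assoc; auto.
Qed.

Definition ext (w : list nat) : point := fun i => nth i w 0%nat.

Lemma ext_inX k w : (0 < k)%nat -> valid_word k w -> inX k (ext w).
Proof.
  intros Hk Hv i. unfold ext. destruct (Nat.lt_ge_cases i (length w)).
  - unfold valid_word in Hv. rewrite Forall_forall in Hv. apply Hv, nth_In; auto.
  - rewrite nth_overflow; auto.
Qed.

Lemma prefix_length x n : length (prefix x n) = n.
Proof. unfold prefix; rewrite length_map, length_seq; auto. Qed.

Lemma prefix_nth x n i : (i < n)%nat -> nth i (prefix x n) 0%nat = x i.
Proof.
  intros Hi. unfold prefix.
  rewrite nth_indep with (d' := x 0%nat) by (rewrite length_map, length_seq; auto).
  rewrite map_nth, seq_nth; auto.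
Qed.

Lemma prefix_ext w : prefix (ext w) (length w) = w.
Proof.
  apply nth_ext with (d := 0%nat) (d' := 0%nat); rewrite prefix_length; auto.
  intros i Hi. rewrite prefix_nth; auto.
Qed.

Lemma prefix_S x n : prefix x (S n) = prefix x n ++ [x n].
Proof. unfold prefix. rewrite seq_S, map_app; auto. Qed.

Lemma prefix_add z j n : prefix z (j + n) = prefix z j ++ prefix (shiftn j z) n.
Proof.
  induction n; [rewrite Nat.add_0_r; simpl; rewrite app_nil_r; auto |].
  rewrite <- plus_n_Sm, !prefix_S, IHn, app_assoc. reflexivity.
Qed.

Lemma app_length_inj (a b v w : list nat) :
  length a = length v -> a ++ b = v ++ w -> a = v /\ b = w.
Proof.
  revert v; induction a; intros v Hl H; destruct v; simpl in *; try discriminate; auto.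
  injection H as -> H. injection Hl as Hl. destruct (IHa v Hl H); subst; auto.
Qed.

Lemma Sn_S F n x : Sn F (S n) x = Sn F n x + F (shiftn n x).
Proof. unfold Sn. rewrite seq_S, map_app, Rsum_app. simpl. lra. Qed.

Lemma Sn_ext F G n x x' :
  (forall i, (i < n)%nat -> F (shiftn i x) = G (shiftn i x')) -> Sn F n x = Sn G n x'.
Proof. induction n; intros H; auto. rewrite !Sn_S, IHn, H; auto. Qed.

Lemma Sn_plus F G n x : Sn (fun y => F y + G y) n x = Sn F n x + Sn G n x.
Proof. induction n; [unfold Sn; simpl; lra |]. rewrite !Sn_S, IHn. lra. Qed.

Lemma shiftn_comp j n x : shiftn n (shiftn j x) = shiftn (j + n) x.
Proof. apply functional_extensionality; intros i. unfold shiftn. f_equal. lia. Qed.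

Lemma Sn_add F j n x : Sn F (j + n) x = Sn F j x + Sn F n (shiftn j x).
Proof.
  induction n; [rewrite Nat.add_0_r; unfold Sn at 3; simpl; lra |].
  rewrite <- plus_n_Sm, !Sn_S, IHn, shiftn_comp. lra.
Qed.

Lemma sum_right_extensions L m v n : inv_prob L m -> valid_word L v ->
  Rsum (map (fun w => m (v ++ w)) (words L n)) = m v.
Proof.
  intros [_ [_ [Hc _]]] Hv. induction n; [simpl; rewrite app_nil_r; lra |].
  rewrite words_S, Rsum_flat_map, <- IHn. apply Rsum_ext. intros w Hw.
  rewrite map_map. apply in_words in Hw. destruct Hw as [Hw _].
  rewrite (Hc (v ++ w)) by (apply valid_app; auto). apply Rsum_ext. intros a _.
  rewrite app_assoc; auto.
Qed.

Lemma sum_left_extensions L m w n : inv_prob L m -> valid_word L w ->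
  Rsum (map (fun v => m (v ++ w)) (words L n)) = m w.
Proof.
  intros [_ [_ [_ Hi]]] Hw. induction n; [simpl; lra |].
  change (S n) with (1 + n)%nat. rewrite Rsum_words_add, words_1, map_map, Rsum_swap, <- IHn.
  apply Rsum_ext. intros v Hv. apply in_words in Hv. destruct Hv as [Hv _].
  rewrite (Hi (v ++ w)) by (apply valid_app; auto). reflexivity.
Qed.

Lemma total_mass L m n : inv_prob L m -> Rsum (map m (words L n)) = 1.
Proof.
  intros Hm. pose proof (sum_right_extensions L m [] n Hm (Forall_nil _)) as H.
  destruct Hm as [_ [H1 _]]. rewrite <- H1, <- H. reflexivity.
Qed.
(** ** Uniqueness of invariant Gibbs measures on a full shift *)

Definition gibbs_weight (g : point -> R) (P : R) (z : point) (n : nat) : R :=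
  exp (- INR n * P + Sn g n z).

Definition gibbs_bounds L g m P C : Prop :=
  forall z n, inX L z -> (1 <= n)%nat ->
    / C * gibbs_weight g P z n < m (prefix z n) < C * gibbs_weight g P z n.

Lemma Gibbs_bounds L g m : Gibbs L g m -> exists P C, 0 < C /\ gibbs_bounds L g m P C.
Proof.
  intros [P [C [HC H]]]. exists P, C. split; auto. intros z n Hz Hn.
  specialize (H z n Hz Hn). unfold gibbs_weight. set (E := exp _) in *.
  assert (HE : 0 < E) by apply exp_pos. set (M := m _) in *.
  assert (M = M / E * E) by (field; lra). split; nra.
Qed.

(* Non-strict Gibbs inequalities suffice: enlarge the constant. *)
Lemma Gibbs_of_weak_bounds L g m P K : 0 < K ->
  (forall z n, inX L z -> (1 <= n)%nat ->
     / K * gibbs_weight g P z n <= m (prefix z n) <= K * gibbs_weight g P z n) ->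
  Gibbs L g m.
Proof.
  intros HK H. exists P, (2 * K). split; [lra |]. intros z n Hz Hn.
  destruct (H z n Hz Hn) as [Hlo Hup]. unfold gibbs_weight in *.
  set (E := exp _) in *. assert (HE : 0 < E) by apply exp_pos. set (M := m _) in *.
  assert (0 < / K * E) by (apply Rmult_lt_0_compat; auto; apply Rinv_0_lt_compat; auto).
  split.
  - apply Rmult_lt_reg_r with E; auto. replace (M / E * E) with M by (field; lra).
    replace (/ (2 * K) * E) with (/ 2 * (/ K * E)) by (field; lra). lra.
  - apply Rmult_lt_reg_r with E; auto. replace (M / E * E) with M by (field; lra). nra.
Qed.

Lemma gibbs_weight_add g P z j n :
  gibbs_weight g P z (j + n) = gibbs_weight g P z j * gibbs_weight g P (shiftn j z) n.
Proof. unfold gibbs_weight. rewrite <- exp_plus, plus_INR, Sn_add. f_equal. ring. Qed.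

Lemma gibbs_bounds_word L g m P C : (0 < L)%nat -> gibbs_bounds L g m P C ->
  forall w, valid_word L w -> (1 <= length w)%nat ->
    / C * gibbs_weight g P (ext w) (length w) < m w < C * gibbs_weight g P (ext w) (length w).
Proof.
  intros HL H w Hw Hl. pose proof (H (ext w) (length w) (ext_inX L w HL Hw) Hl) as H'.
  rewrite prefix_ext in H'. exact H'.
Qed.

Lemma gibbs_comparison L g m1 m2 P1 C1 P2 C2 :
  (0 < L)%nat -> 0 < C1 -> 0 < C2 -> gibbs_bounds L g m1 P1 C1 -> gibbs_bounds L g m2 P2 C2 ->
  forall w, valid_word L w -> (1 <= length w)%nat ->
    exp (INR (length w) * (P2 - P1)) * m2 w < C1 * C2 * m1 w.
Proof.
  intros HL HC1 HC2 H1 H2 w Hw Hl.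
  destruct (gibbs_bounds_word L g m1 P1 C1 HL H1 w Hw Hl) as [lo1 _].
  destruct (gibbs_bounds_word L g m2 P2 C2 HL H2 w Hw Hl) as [_ up2].
  assert (Hshift : gibbs_weight g P1 (ext w) (length w) =
                   exp (INR (length w) * (P2 - P1)) * gibbs_weight g P2 (ext w) (length w)).
  { unfold gibbs_weight. rewrite <- exp_plus. f_equal. ring. }
  rewrite Hshift in lo1. set (X := exp _) in *. set (E := gibbs_weight _ _ _ _) in *.
  assert (0 < X) by apply exp_pos.
  assert (X * m2 w < X * (C2 * E)) by (apply Rmult_lt_compat_l; auto).
  assert (C1 * (/ C1 * (X * E)) < C1 * m1 w) by (apply Rmult_lt_compat_l; auto).
  assert (C1 * (/ C1 * (X * E)) = X * E) by (field; lra).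
  assert (C2 * (X * E) < C2 * (C1 * m1 w)) by (apply Rmult_lt_compat_l; lra).
  nra.
Qed.

Lemma exp_linear_bounded d K : (forall n, (1 <= n)%nat -> exp (INR n * d) <= K) -> d <= 0.
Proof.
  intros H. destruct (Rle_or_lt d 0) as [? | Hd]; auto. exfalso.
  destruct (INR_archimed d K Hd) as [n Hn]. specialize (H (S n) ltac:(lia)).
  assert (Hne : INR (S n) * d <> 0) by (rewrite S_INR; pose proof (pos_INR n); nra).
  pose proof (exp_ineq1 _ Hne). rewrite S_INR in *. lra.
Qed.

(* Comparing total masses of the two probability measures shows P2 ≤ P1. *)
Lemma gibbs_pressure_le L g m1 m2 P1 C1 P2 C2 :
  (0 < L)%nat -> 0 < C1 -> 0 < C2 -> inv_prob L m1 -> inv_prob L m2 ->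
  gibbs_bounds L g m1 P1 C1 -> gibbs_bounds L g m2 P2 C2 -> P2 <= P1.
Proof.
  intros HL HC1 HC2 I1 I2 H1 H2.
  enough (P2 - P1 <= 0) by lra. apply (exp_linear_bounded _ (C1 * C2)). intros n Hn.
  rewrite <- (Rmult_1_r (exp _)), <- (Rmult_1_r (C1 * C2)).
  rewrite <- (total_mass L m1 n I1) at 2. rewrite <- (total_mass L m2 n I2), <- !Rsum_scal.
  apply Rsum_le. intros w Hw. destruct (in_words _ _ _ Hw) as [Hv Hl]. subst n.
  left. apply (gibbs_comparison L g m1 m2 P1 C1 P2 C2); auto.
Qed.

Lemma gibbs_quasi_multiplicative L g m P C : (0 < L)%nat -> 0 < C -> gibbs_bounds L g m P C ->
  forall v w, valid_word L v -> valid_word L w -> (1 <= length v)%nat -> (1 <= length w)%nat ->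
    / (C * C * C) * m v * m w <= m (v ++ w).
Proof.
  intros HL HC H v w Hv Hw Hlv Hlw.
  set (z := ext (v ++ w)). set (j := length v). set (n := length w).
  assert (Hz : inX L z) by (apply ext_inX; auto; apply valid_app; auto).
  assert (Hp : prefix z (j + n) = v ++ w) by (unfold z, j, n; rewrite <- length_app; apply prefix_ext).
  pose proof Hp as Hsplit. rewrite prefix_add in Hsplit.
  apply app_length_inj in Hsplit; [| rewrite prefix_length; auto]. destruct Hsplit as [Hpv Hpw].
  destruct (H z (j + n)%nat Hz ltac:(lia)) as [lo _].
  destruct (H z j Hz ltac:(lia)) as [lo1 up1].
  destruct (H (shiftn j z) n (fun i => Hz _) ltac:(lia)) as [lo2 up2].
  rewrite Hp in lo. rewrite Hpv in lo1, up1. rewrite Hpw in lo2, up2. rewrite gibbs_weight_add in lo.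
  set (E1 := gibbs_weight g P z j) in *. set (E2 := gibbs_weight g P (shiftn j z) n) in *.
  assert (0 < E1) by apply exp_pos. assert (0 < E2) by apply exp_pos.
  pose proof (Rinv_0_lt_compat C HC).
  assert (0 <= m v) by nra. assert (0 <= m w) by nra.
  assert (Hprod : m v * m w <= (C * E1) * (C * E2)) by (apply Rmult_le_compat; lra).
  assert (0 < C * C * C) by (repeat apply Rmult_lt_0_compat; auto).
  assert (/ (C * C * C) * (m v * m w) <= / (C * C * C) * ((C * E1) * (C * E2)))
    by (apply Rmult_le_compat_l; [left; apply Rinv_0_lt_compat |]; auto).
  assert (/ (C * C * C) * ((C * E1) * (C * E2)) = / C * (E1 * E2)) by (field; lra).
  rewrite Rmult_assoc. lra.
Qed.

Section VarianceArgument.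

Variables (L : nat) (m1 m2 : list nat -> R) (D c : R).
Hypothesis inv1 : inv_prob L m1.
Hypothesis inv2 : inv_prob L m2.
Hypothesis c_pos : 0 < c.
Hypothesis m2_pos : forall w, valid_word L w -> (1 <= length w)%nat -> 0 < m2 w.
Hypothesis m1_dominated : forall w, valid_word L w -> (1 <= length w)%nat -> m1 w <= D * m2 w.
Hypothesis m2_quasi_mult : forall v w, valid_word L v -> valid_word L w ->
  (1 <= length v)%nat -> (1 <= length w)%nat -> c * m2 v * m2 w <= m2 (v ++ w).

Definition ratio (w : list nat) : R := m1 w / m2 w.
Definition second_moment (n : nat) : R := Rsum (map (fun w => m1 w * ratio w) (words L n)).

Lemma m1_nonneg w : valid_word L w -> 0 <= m1 w.
Proof. destruct inv1 as [H _]. apply H. Qed.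

Lemma second_moment_le n : (1 <= n)%nat -> second_moment n <= D.
Proof.
  intros Hn. unfold second_moment.
  rewrite <- (Rmult_1_r D), <- (total_mass L m1 n inv1), <- Rsum_scal.
  apply Rsum_le. intros w Hw. destruct (in_words _ _ _ Hw) as [Hv Hl].
  pose proof (m2_pos w Hv ltac:(lia)). pose proof (m1_nonneg w Hv).
  pose proof (m1_dominated w Hv ltac:(lia)). unfold ratio.
  rewrite Rmult_comm. apply Rmult_le_compat_r; auto.
  apply Rmult_le_reg_r with (m2 w); auto. field_simplify; lra.
Qed.

(* Expanding a square around the mean of the ratio on the extensions of a cylinder. *)
Lemma local_variance (l : list (list nat)) (Z : list nat) :
  (forall u, In u l -> valid_word L u /\ (1 <= length u)%nat) -> 0 < m2 Z ->
  Rsum (map m1 l) = m1 Z -> Rsum (map m2 l) = m2 Z ->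
  Rsum (map (fun u => m2 u * (ratio u - ratio Z) ^ 2) l) =
  Rsum (map (fun u => m1 u * ratio u) l) - m1 Z * ratio Z.
Proof.
  intros Hl HZ S1 S2.
  rewrite (Rsum_ext _ _ (fun u => m1 u * ratio u - (2 * ratio Z) * m1 u + (ratio Z ^ 2) * m2 u)).
  - rewrite Rsum_plus, Rsum_minus, !Rsum_scal, S1, S2. unfold ratio. field. lra.
  - intros u Hu. destruct (Hl u Hu) as [Hv Hlen]. pose proof (m2_pos u Hv Hlen).
    unfold ratio. field. lra.
Qed.

Lemma variance_right n : (1 <= n)%nat ->
  Rsum (map (fun v => Rsum (map (fun w =>
     m2 (v ++ w) * (ratio (v ++ w) - ratio v) ^ 2) (words L n))) (words L n))
  = second_moment (n + n) - second_moment n.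
Proof.
  intros Hn. unfold second_moment. rewrite Rsum_words_add, <- Rsum_minus.
  apply Rsum_ext. intros v Hv. destruct (in_words _ _ _ Hv) as [Hvv Hvl].
  pose proof (local_variance (map (fun w => v ++ w) (words L n)) v) as E.
  rewrite !map_map in E. apply E.
  - intros u Hu. apply in_map_iff in Hu. destruct Hu as [w [<- Hw]].
    destruct (in_words _ _ _ Hw). split; [apply valid_app; auto | rewrite length_app; lia].
  - apply m2_pos; auto; lia.
  - apply sum_right_extensions; auto.
  - apply sum_right_extensions; auto.
Qed.

Lemma variance_left n : (1 <= n)%nat ->
  Rsum (map (fun v => Rsum (map (fun w =>
     m2 (v ++ w) * (ratio (v ++ w) - ratio w) ^ 2) (words L n))) (words L n))
  = second_moment (n + n) - second_moment n.
Proof.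
  intros Hn. unfold second_moment.
  rewrite Rsum_words_add, Rsum_swap, (Rsum_swap _ _ (fun v w => m1 (v ++ w) * ratio (v ++ w))),
    <- Rsum_minus.
  apply Rsum_ext. intros w Hw. destruct (in_words _ _ _ Hw) as [Hwv Hwl].
  pose proof (local_variance (map (fun v => v ++ w) (words L n)) w) as E.
  rewrite !map_map in E. apply E.
  - intros u Hu. apply in_map_iff in Hu. destruct Hu as [v [<- Hv]].
    destruct (in_words _ _ _ Hv). split; [apply valid_app; auto | rewrite length_app; lia].
  - apply m2_pos; auto; lia.
  - apply sum_left_extensions; auto.
  - apply sum_left_extensions; auto.
Qed.

Lemma variance_product n : (1 <= n)%nat ->
  Rsum (map (fun v => Rsum (map (fun w =>
     m2 v * m2 w * (ratio v - ratio w) ^ 2) (words L n))) (words L n))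
  = 2 * second_moment n - 2.
Proof.
  intros Hn.
  assert (Hm1 := total_mass L m1 n inv1). assert (Hm2 := total_mass L m2 n inv2).
  rewrite (Rsum_ext _ _ (fun v => m1 v * ratio v - 2 * m1 v + second_moment n * m2 v)).
  - rewrite Rsum_plus, Rsum_minus, !Rsum_scal, Hm1, Hm2. unfold second_moment. ring.
  - intros v Hv. destruct (in_words _ _ _ Hv) as [Hvv Hvl]. pose proof (m2_pos v Hvv ltac:(lia)).
    rewrite (Rsum_ext _ _ (fun w => m2 v * (m1 w * ratio w) - (2 * m1 v) * m1 w
                                    + (m1 v * ratio v) * m2 w)).
    + rewrite Rsum_plus, Rsum_minus, !Rsum_scal, Hm1, Hm2. unfold second_moment. ring.
    + intros w Hw. destruct (in_words _ _ _ Hw) as [Hwv Hwl].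
      pose proof (m2_pos w Hwv ltac:(lia)). unfold ratio. field. lra.
Qed.

(* Quasi-multiplicativity and (a - b)² ≤ 2(x - a)² + 2(x - b)² give the doubling inequality. *)
Lemma second_moment_doubling n : (1 <= n)%nat ->
  c * (second_moment n - 1) <= 2 * (second_moment (n + n) - second_moment n).
Proof.
  intros Hn.
  set (S := Rsum (map (fun v => Rsum (map (fun w =>
     m2 (v ++ w) * (ratio v - ratio w) ^ 2) (words L n))) (words L n))).
  assert (Hlow : c * (2 * second_moment n - 2) <= S).
  { rewrite <- (variance_product n Hn), <- Rsum_scal. apply Rsum_le. intros v Hv.
    rewrite <- Rsum_scal. apply Rsum_le. intros w Hw.
    destruct (in_words _ _ _ Hv) as [Hvv Hvl]. destruct (in_words _ _ _ Hw) as [Hwv Hwl].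
    pose proof (m2_quasi_mult v w Hvv Hwv ltac:(lia) ltac:(lia)).
    pose proof (pow2_ge_0 (ratio v - ratio w)).
    replace (c * (m2 v * m2 w * (ratio v - ratio w) ^ 2))
      with ((c * m2 v * m2 w) * (ratio v - ratio w) ^ 2) by ring.
    apply Rmult_le_compat_r; auto. }
  assert (Hup : S <= 2 * (second_moment (n + n) - second_moment n)
                   + 2 * (second_moment (n + n) - second_moment n)).
  { rewrite <- (variance_right n Hn) at 1. rewrite <- (variance_left n Hn).
    unfold S. rewrite <- !Rsum_scal, <- Rsum_plus. apply Rsum_le. intros v Hv.
    rewrite <- !Rsum_scal, <- Rsum_plus. apply Rsum_le. intros w Hw.
    destruct (in_words _ _ _ Hv) as [Hvv Hvl]. destruct (in_words _ _ _ Hw) as [Hwv Hwl].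
    pose proof (m2_pos (v ++ w) ltac:(apply valid_app; auto) ltac:(rewrite length_app; lia)).
    set (x := ratio (v ++ w)). set (a := ratio v). set (b := ratio w).
    pose proof (pow2_ge_0 (a + b - 2 * x)). nra. }
  lra.
Qed.

Lemma second_moment_growth n : (1 <= n)%nat -> 1 <= second_moment n ->
  forall t, (second_moment n - 1) * (1 + INR t * (c / 2)) <= second_moment (2 ^ t * n) - 1.
Proof.
  intros Hn H0 t. induction t; [simpl; rewrite Nat.add_0_r; lra |].
  assert (Hpos : (1 <= 2 ^ t * n)%nat) by (pose proof (Nat.pow_nonzero 2 t); nia).
  pose proof (second_moment_doubling (2 ^ t * n) Hpos) as Hd.
  replace (2 ^ S t * n)%nat with (2 ^ t * n + 2 ^ t * n)%nat by (simpl; lia).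
  rewrite S_INR. pose proof (pos_INR t).
  set (a := second_moment n - 1) in *. set (b := second_moment (2 ^ t * n)) in *.
  assert (0 <= a) by (unfold a; lra).
  assert (0 <= a * INR t * c) by (repeat apply Rmult_le_pos; lra).
  assert (a <= b - 1) by nra.
  assert (0 <= c * (b - 1 - a)) by (apply Rmult_le_pos; lra).
  nra.
Qed.

Lemma second_moment_le_1 n : (1 <= n)%nat -> second_moment n <= 1.
Proof.
  intros Hn. destruct (Rle_or_lt (second_moment n) 1) as [? | Hlt]; auto. exfalso.
  set (d := second_moment n - 1).
  destruct (INR_archimed (d * (c / 2)) D) as [t Ht]; [unfold d; nra |].
  pose proof (second_moment_growth n Hn ltac:(lra) t) as Hg.
  assert (Ht2 : (1 <= 2 ^ t * n)%nat) by (pose proof (Nat.pow_nonzero 2 t); nia).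
  pose proof (second_moment_le (2 ^ t * n) Ht2). fold d in Hg. unfold d in *. nra.
Qed.

(* Σ m2 (ratio - 1)² = second_moment - 1 ≤ 0, so every ratio equals 1. *)
Lemma measures_agree w : valid_word L w -> (1 <= length w)%nat -> m1 w = m2 w.
Proof.
  intros Hw Hl. set (n := length w).
  assert (Hnn : forall u, In u (words L n) -> 0 <= m2 u * (ratio u - 1) ^ 2).
  { intros u Hu. destruct (in_words _ _ _ Hu) as [Huv Hul].
    pose proof (m2_pos u Huv ltac:(lia)). pose proof (pow2_ge_0 (ratio u - 1)). nra. }
  assert (Hs : Rsum (map (fun u => m2 u * (ratio u - 1) ^ 2) (words L n)) <= 0).
  { rewrite (Rsum_ext _ _ (fun u => m1 u * ratio u - 2 * m1 u + m2 u)).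
    - rewrite Rsum_plus, Rsum_minus, Rsum_scal, (total_mass L m1 n inv1), (total_mass L m2 n inv2).
      pose proof (second_moment_le_1 n Hl). unfold second_moment in *. lra.
    - intros u Hu. destruct (in_words _ _ _ Hu) as [Huv Hul].
      pose proof (m2_pos u Huv ltac:(lia)). unfold ratio. field. lra. }
  assert (Hin : In w (words L n)) by (apply words_spec; auto).
  pose proof (Rsum_ge_In _ _ w Hnn Hin) as Hterm. cbv beta in Hterm.
  pose proof (Hnn w Hin). pose proof (m2_pos w Hw Hl).
  assert (Hsq : (ratio w - 1) ^ 2 = 0) by nra.
  assert (Hone : ratio w = 1) by nra.
  replace (m1 w) with (ratio w * m2 w) by (unfold ratio; field; lra).
  rewrite Hone. ring.
Qed.

End VarianceArgument.

Theorem gibbs_unique L g m1 m2 : (0 < L)%nat -> inv_prob L m1 -> inv_prob L m2 ->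
  Gibbs L g m1 -> Gibbs L g m2 -> same_measure L m1 m2.
Proof.
  intros HL I1 I2 G1 G2.
  destruct (Gibbs_bounds L g m1 G1) as [P1 [C1 [HC1 B1]]].
  destruct (Gibbs_bounds L g m2 G2) as [P2 [C2 [HC2 B2]]].
  assert (P2 <= P1) by (apply (gibbs_pressure_le L g m1 m2 P1 C1 P2 C2); auto).
  assert (P1 <= P2) by (apply (gibbs_pressure_le L g m2 m1 P2 C2 P1 C1); auto).
  replace P2 with P1 in * by lra.
  intros w Hw. destruct w as [| a w].
  - destruct I1 as [_ [-> _]]. destruct I2 as [_ [-> _]]. reflexivity.
  - apply (measures_agree L m1 m2 (C1 * C2) (/ (C2 * C2 * C2))); auto; try (simpl; lia).
    + apply Rinv_0_lt_compat; repeat apply Rmult_lt_0_compat; auto.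
    + intros u Hu Hl. destruct (gibbs_bounds_word L g m2 P1 C2 HL B2 u Hu Hl) as [lo _].
      pose proof (exp_pos (- INR (length u) * P1 + Sn g (length u) (ext u))).
      unfold gibbs_weight in lo. pose proof (Rinv_0_lt_compat C2 HC2). nra.
    + intros u Hu Hl. pose proof (gibbs_comparison L g m2 m1 P1 C2 P1 C1 HL HC2 HC1 B2 B1 u Hu Hl) as Hc.
      replace (P1 - P1) with 0 in Hc by ring. rewrite Rmult_0_r, exp_0 in Hc. lra.
    + intros v u Hv Hu Hlv Hlu. apply (gibbs_quasi_multiplicative L g m2 P1 C2); auto.
Qed.

(** ** The factor potential *)

Section OneBlockFactor.

Variables (k l : nat) (p : nat -> nat).
Hypothesis p_surj : forall b, (b < l)%nat -> exists a, (a < k)%nat /\ p a = b.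

Definition lift_letter (b : nat) : nat :=
  match filter (fun a => Nat.eqb (p a) b) (seq 0 k) with a :: _ => a | [] => 0%nat end.

Definition section_map (y : point) : point := fun i => lift_letter (y i).

Definition fibre_size (b : nat) : R := Rsum (map (fun a => indR (Nat.eqb (p a) b)) (seq 0 k)).

Definition factor_potential (f : point -> R) (y : point) : R :=
  f (section_map y) + ln (fibre_size (y 0%nat)).

Lemma lift_letter_spec b : (b < l)%nat -> (lift_letter b < k)%nat /\ p (lift_letter b) = b.
Proof.
  intros Hb. destruct (p_surj b Hb) as [a [Ha Hpa]]. unfold lift_letter.
  assert (Hin : In a (filter (fun a => Nat.eqb (p a) b) (seq 0 k)))
    by (apply filter_In; split; [apply in_seq; lia | apply Nat.eqb_eq; auto]).
  destruct (filter _ _) as [| a' t] eqn:E; [contradiction |].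
  assert (Hin' : In a' (filter (fun a => Nat.eqb (p a) b) (seq 0 k))) by (rewrite E; left; auto).
  apply filter_In in Hin'. destruct Hin' as [H1 H2]. apply in_seq in H1. apply Nat.eqb_eq in H2.
  split; [lia | auto].
Qed.

Lemma section_inX y : inX l y -> inX k (section_map y).
Proof. intros Hy i. apply lift_letter_spec, Hy. Qed.

Lemma fibre_size_pos b : (b < l)%nat -> 0 < fibre_size b.
Proof.
  intros Hb. destruct (p_surj b Hb) as [a [Ha Hpa]].
  assert (H : indR (Nat.eqb (p a) b) <= fibre_size b)
    by (apply (Rsum_ge_In (seq 0 k) (fun a => indR (Nat.eqb (p a) b)) a);
        [intros; apply indR_nonneg | apply in_seq; lia]).
  rewrite Hpa, Nat.eqb_refl in H. unfold indR at 1 in H. lra.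
Qed.

Definition lies_above (w v : list nat) : bool :=
  if list_eq_dec Nat.eq_dec (map p w) v then true else false.

Lemma lies_above_eq w v : lies_above w v = true -> map p w = v.
Proof. unfold lies_above. destruct (list_eq_dec Nat.eq_dec _ v); auto; discriminate. Qed.

Lemma lies_above_snoc w v a b :
  indR (lies_above (w ++ [a]) (v ++ [b])) = indR (lies_above w v) * indR (Nat.eqb (p a) b).
Proof.
  unfold lies_above. rewrite map_app. change (map p [a]) with [p a].
  destruct (list_eq_dec Nat.eq_dec (map p w ++ [p a]) (v ++ [b])) as [e | e].
  - apply app_inj_tail in e. destruct e as [-> ->]. rewrite Nat.eqb_refl.
    destruct (list_eq_dec Nat.eq_dec v v); [unfold indR; lra | contradiction].
  - destruct (list_eq_dec Nat.eq_dec (map p w) v); destruct (Nat.eqb_spec (p a) b);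
      unfold indR; try lra. subst. contradiction.
Qed.

Lemma lies_above_cons w v a b :
  indR (lies_above (a :: w) (b :: v)) = indR (Nat.eqb (p a) b) * indR (lies_above w v).
Proof.
  unfold lies_above. change (map p (a :: w)) with (p a :: map p w).
  destruct (list_eq_dec Nat.eq_dec (p a :: map p w) (b :: v)) as [e | e].
  - injection e as <- <-. rewrite Nat.eqb_refl.
    destruct (list_eq_dec Nat.eq_dec (map p w) (map p w)); [unfold indR; lra | contradiction].
  - destruct (list_eq_dec Nat.eq_dec (map p w) v); destruct (Nat.eqb_spec (p a) b);
      unfold indR; try lra. subst. contradiction.
Qed.

(* |π⁻¹[y_0 … y_{n-1}]| = Π_{i<n} #π⁻¹(y_i) = exp S_n (log #π⁻¹(y_0)). *)
Lemma preimage_count y n : inX l y ->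
  exp (Sn (fun z => ln (fibre_size (z 0%nat))) n y) = INR (length (preimage_words k p y n)).
Proof.
  intros Hy. unfold preimage_words. rewrite length_filter_indR.
  change (fun x => indR (if list_eq_dec Nat.eq_dec (map p x) (prefix y n) then true else false))
    with (fun x => indR (lies_above x (prefix y n))).
  induction n.
  - unfold Sn; simpl. rewrite exp_0. unfold lies_above.
    destruct (list_eq_dec Nat.eq_dec (@nil nat) (@nil nat)); [unfold indR; lra | contradiction].
  - rewrite Sn_S, exp_plus, prefix_S, words_S, Rsum_flat_map, IHn.
    unfold shiftn at 1. rewrite Nat.add_0_r, exp_ln by (apply fibre_size_pos, Hy).
    rewrite Rmult_comm, <- Rsum_scal. apply Rsum_ext. intros w _.
    rewrite map_map, (Rsum_ext _ _ (fun a => indR (lies_above w (prefix y n)) * indR (Nat.eqb (p a) (y n))))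
      by (intros; apply lies_above_snoc).
    rewrite Rsum_scal. unfold fibre_size. ring.
Qed.

Lemma section_potential_birkhoff f n y :
  Sn (factor_potential f) n y =
  Sn f n (section_map y) + Sn (fun z => ln (fibre_size (z 0%nat))) n y.
Proof. unfold factor_potential. rewrite Sn_plus. reflexivity. Qed.

Lemma factor_potential_continuous f :
  continuous_on_shift k f -> continuous_on_shift l (factor_potential f).
Proof.
  intros Hf y Hy eps He.
  destruct (Hf (section_map y) (section_inX y Hy) eps He) as [m Hm]. exists (S m).
  intros z Hz Ha.
  assert (Hag : agree m (section_map y) (section_map z))
    by (intros i Hi; unfold section_map; rewrite (Ha i ltac:(lia)); auto).
  specialize (Hm _ (section_inX z Hz) Hag). unfold factor_potential.
  rewrite (Ha 0%nat ltac:(lia)).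
  replace (f (section_map z) + ln (fibre_size (z 0%nat)) - (f (section_map y) + ln (fibre_size (z 0%nat))))
    with (f (section_map z) - f (section_map y)) by ring. auto.
Qed.

Lemma factor_potential_bowen f : Bow k f -> Bow l (factor_potential f).
Proof.
  intros [C HC]. exists C. intros n z z' Hz Hz' Ha. rewrite !section_potential_birkhoff.
  assert (Sn (fun y => ln (fibre_size (y 0%nat))) n z = Sn (fun y => ln (fibre_size (y 0%nat))) n z')
    by (apply Sn_ext; intros i Hi; unfold shiftn; rewrite Nat.add_0_r, (Ha i Hi); auto).
  assert (Sn f n (section_map z) - Sn f n (section_map z') <= C).
  { apply HC; try apply section_inX; auto.
    intros i Hi. unfold section_map. rewrite (Ha i Hi). auto. }
  lra.
Qed.


Hypothesis p_range : forall a, (a < k)%nat -> (p a < l)%nat.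

Lemma pushforward_indR (mu : list nat -> R) v :
  pushforward k p mu v = Rsum (map (fun w => indR (lies_above w v) * mu w) (words k (length v))).
Proof. exact (Rsum_filter _ _ _). Qed.

(* Every letter of [X] lies above exactly one letter of [Y]. *)
Lemma letter_fibre_sum a x : (a < k)%nat ->
  Rsum (map (fun b => indR (Nat.eqb (p a) b) * x) (seq 0 l)) = x.
Proof. intros Ha. apply Rsum_delta; [apply seq_NoDup | apply in_seq; specialize (p_range a Ha); lia]. Qed.

Lemma pushforward_consistent mu v : inv_prob k mu -> valid_word l v ->
  pushforward k p mu v = Rsum (map (fun b => pushforward k p mu (v ++ [b])) (seq 0 l)).
Proof.
  intros [_ [_ [Hc _]]] Hv.
  transitivity (Rsum (map (fun b => Rsum (map (fun w => Rsum (map (fun a =>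
    indR (lies_above w v) * (indR (Nat.eqb (p a) b) * mu (w ++ [a]))) (seq 0 k)))
    (words k (length v)))) (seq 0 l))).
  - rewrite pushforward_indR, Rsum_swap. apply Rsum_ext. intros w Hw.
    destruct (in_words _ _ _ Hw) as [Hwv _].
    rewrite Rsum_swap, (Hc w Hwv), <- Rsum_scal. apply Rsum_ext. intros a Ha. apply in_seq in Ha.
    rewrite <- (letter_fibre_sum a (indR (lies_above w v) * mu (w ++ [a]))) by lia.
    apply Rsum_ext. intros b _. ring.
  - apply Rsum_ext. intros b _.
    rewrite pushforward_indR, length_app, Nat.add_1_r, words_S, Rsum_flat_map.
    apply Rsum_ext. intros w _. rewrite map_map. apply Rsum_ext. intros a _.
    rewrite lies_above_snoc. ring.
Qed.

Lemma pushforward_invariant mu v : inv_prob k mu -> valid_word l v ->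
  pushforward k p mu v = Rsum (map (fun b => pushforward k p mu (b :: v)) (seq 0 l)).
Proof.
  intros [_ [_ [_ Hi]]] Hv.
  transitivity (Rsum (map (fun b => Rsum (map (fun w => Rsum (map (fun a =>
    indR (lies_above w v) * (indR (Nat.eqb (p a) b) * mu (a :: w))) (seq 0 k)))
    (words k (length v)))) (seq 0 l))).
  - rewrite pushforward_indR, Rsum_swap. apply Rsum_ext. intros w Hw.
    destruct (in_words _ _ _ Hw) as [Hwv _].
    rewrite Rsum_swap, (Hi w Hwv), <- Rsum_scal. apply Rsum_ext. intros a Ha. apply in_seq in Ha.
    rewrite <- (letter_fibre_sum a (indR (lies_above w v) * mu (a :: w))) by lia.
    apply Rsum_ext. intros b _. ring.
  - apply Rsum_ext. intros b _. rewrite pushforward_indR.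
    change (length (b :: v)) with (1 + length v)%nat.
    rewrite Rsum_words_add, words_1, map_map, Rsum_swap.
    apply Rsum_ext. intros a _. apply Rsum_ext. intros w _.
    change ([a] ++ w) with (a :: w). rewrite lies_above_cons. ring.
Qed.

Lemma pushforward_inv_prob mu : (0 < k)%nat -> inv_prob k mu -> inv_prob l (pushforward k p mu).
Proof.
  intros Hk Hmu. split; [| split; [| split]].
  - intros v _. rewrite pushforward_indR. apply Rsum_nonneg. intros w Hw.
    destruct (in_words _ _ _ Hw) as [Hwv _]. destruct Hmu as [Hnn _].
    apply Rmult_le_pos; [apply indR_nonneg | auto].
  - rewrite pushforward_indR. unfold lies_above; simpl.
    destruct Hmu as [_ [-> _]]. unfold indR. lra.
  - intros v Hv. apply pushforward_consistent; auto.
  - intros v Hv. apply pushforward_invariant; auto.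
Qed.

Definition maps_into_cylinder (n : nat) (x y : point) : Prop :=
  forall z, inX k z -> agree n x z -> agree n (pimap p z) y.

Lemma section_maps_into_cylinder n y : inX l y -> maps_into_cylinder n (section_map y) y.
Proof.
  intros Hy z _ Ha i Hi. unfold pimap. rewrite <- (Ha i Hi). unfold section_map.
  apply lift_letter_spec, Hy.
Qed.

Lemma preimage_word_spec y n w : In w (preimage_words k p y n) ->
  valid_word k w /\ length w = n /\ maps_into_cylinder n (ext w) y.
Proof.
  intros Hw. apply filter_In in Hw. destruct Hw as [Hw Hmap].
  apply (lies_above_eq w) in Hmap. destruct (in_words _ _ _ Hw) as [Hv Hl].
  repeat split; auto. intros z _ Ha i Hi. unfold pimap. rewrite <- (Ha i Hi). unfold ext.
  rewrite <- (prefix_nth y n i Hi), <- Hmap, (nth_indep (map p w) 0%nat (p 0%nat)) by (rewrite length_map; lia).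
  rewrite map_nth. reflexivity.
Qed.

Lemma pushforward_prefix mu y n :
  pushforward k p mu (prefix y n) = Rsum (map mu (preimage_words k p y n)).
Proof. unfold pushforward. rewrite prefix_length. reflexivity. Qed.

Lemma gibbs_weight_fn f P x n : gibbs_weight f P x n = exp (- INR n * P) * fn f n x.
Proof. unfold gibbs_weight, fn. apply exp_plus. Qed.

Lemma ratio_comparison A N G F1 F2 : 0 < A -> 0 < N -> 0 < F1 -> 0 < F2 ->
  / A <= G / (N * F1) <= A -> / A <= G / (N * F2) <= A -> F1 <= A * A * F2.
Proof.
  intros HA HN H1 H2 [lo1 _] [_ up2].
  assert (HN1 : 0 < N * F1) by (apply Rmult_lt_0_compat; auto).
  assert (HN2 : 0 < N * F2) by (apply Rmult_lt_0_compat; auto).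
  apply Rmult_le_compat_r with (r := N * F1) in lo1; [| lra].
  apply Rmult_le_compat_r with (r := N * F2) in up2; [| lra].
  replace (G / (N * F1) * (N * F1)) with G in lo1 by (field; lra).
  replace (G / (N * F2) * (N * F2)) with G in up2 by (field; lra).
  assert (N * F1 <= N * (A * A * F2)).
  { replace (N * F1) with (A * (/ A * (N * F1))) by (field; lra).
    replace (N * (A * A * F2)) with (A * (A * (N * F2))) by ring.
    apply Rmult_le_compat_l; lra. }
  apply Rmult_le_reg_l with N; auto.
Qed.

Lemma preimage_cylinder_mass f mu P C0 A G n y x0 :
  (0 < k)%nat -> 0 < C0 -> 0 < A -> (1 <= n)%nat -> gibbs_bounds k f mu P C0 ->
  0 < INR (length (preimage_words k p y n)) ->
  (forall x, inX k x -> maps_into_cylinder n x y ->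
     / A <= G / (INR (length (preimage_words k p y n)) * fn f n x) <= A) ->
  inX k x0 -> maps_into_cylinder n x0 y ->
  forall w, In w (preimage_words k p y n) ->
    / (C0 * A * A) * gibbs_weight f P x0 n <= mu w <= C0 * A * A * gibbs_weight f P x0 n.
Proof.
  intros Hk HC0 HA Hn HB HN HG Hx0 Hcyl0 w Hw.
  destruct (preimage_word_spec y n w Hw) as [Hv [Hlen Hcyl]].
  assert (Hext : inX k (ext w)) by (apply ext_inX; auto).
  pose proof (ratio_comparison A _ G (fn f n x0) (fn f n (ext w)) HA HN (exp_pos _) (exp_pos _)
    (HG x0 Hx0 Hcyl0) (HG _ Hext Hcyl)) as H0w.
  pose proof (ratio_comparison A _ G (fn f n (ext w)) (fn f n x0) HA HN (exp_pos _) (exp_pos _)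
    (HG _ Hext Hcyl) (HG x0 Hx0 Hcyl0)) as Hw0.
  destruct (gibbs_bounds_word k f mu P C0 Hk HB w Hv ltac:(lia)) as [lo up].
  rewrite Hlen, gibbs_weight_fn in lo, up. rewrite gibbs_weight_fn.
  set (e := exp (- INR n * P)) in *. set (fw := fn f n (ext w)) in *. set (f0 := fn f n x0) in *.
  assert (He : 0 < e) by apply exp_pos.
  assert (Hw0' : e * fw <= A * A * (e * f0))
    by (replace (A * A * (e * f0)) with (e * (A * A * f0)) by ring; apply Rmult_le_compat_l; lra).
  assert (H0w' : e * f0 <= A * A * (e * fw))
    by (replace (A * A * (e * fw)) with (e * (A * A * fw)) by ring; apply Rmult_le_compat_l; lra).
  assert (HCAA : 0 < C0 * A * A) by (repeat apply Rmult_lt_0_compat; auto).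
  split.
  - apply Rmult_le_compat_l with (r := / (C0 * A * A)) in H0w'; [| left; apply Rinv_0_lt_compat; auto].
    replace (/ (C0 * A * A) * (A * A * (e * fw))) with (/ C0 * (e * fw)) in H0w' by (field; lra).
    lra.
  - apply Rmult_le_compat_l with (r := C0) in Hw0'; lra.
Qed.

Lemma pushforward_gibbs f mu : (0 < k)%nat -> Gibbs k f mu ->
  (exists A, 0 < A /\
     forall n y, inX l y ->
       exists gbar, is_lub (En_sums k p f n y) gbar /\
       forall x, inX k x -> maps_into_cylinder n x y ->
         / A <= gbar / (INR (length (preimage_words k p y n)) * fn f n x) <= A) ->
  Gibbs l (factor_potential f) (pushforward k p mu).
Proof.
  intros Hk Hmu [A [HA HR]]. destruct (Gibbs_bounds _ _ _ Hmu) as [P [C0 [HC0 HB]]].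
  apply (Gibbs_of_weak_bounds l _ _ P (C0 * A * A)); [repeat apply Rmult_lt_0_compat; auto |].
  intros y n Hy Hn. destruct (HR n y Hy) as [G [_ HG]].
  set (N := INR (length (preimage_words k p y n))) in *.
  assert (HNe : exp (Sn (fun z => ln (fibre_size (z 0%nat))) n y) = N) by (apply preimage_count; auto).
  assert (HN : 0 < N) by (rewrite <- HNe; apply exp_pos).
  set (W := gibbs_weight f P (section_map y) n).
  assert (Hweight : gibbs_weight (factor_potential f) P y n = N * W).
  { unfold W, gibbs_weight. rewrite section_potential_birkhoff, <- HNe, <- exp_plus.
    f_equal. ring. }
  pose proof (preimage_cylinder_mass f mu P C0 A G n y (section_map y) Hk HC0 HA Hn HB HN HG
    (section_inX y Hy) (section_maps_into_cylinder n y Hy)) as Hmass.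
  rewrite pushforward_prefix, Hweight. split.
  - replace (/ (C0 * A * A) * (N * W)) with (N * (/ (C0 * A * A) * W)) by ring.
    apply Rsum_ge_const. intros w Hw. apply Hmass; auto.
  - replace (C0 * A * A * (N * W)) with (N * (C0 * A * A * W)) by ring.
    apply Rsum_le_const. intros w Hw. apply Hmass; auto.
Qed.

End OneBlockFactor.

Theorem proposition5p12
  (k l : nat) (p : nat -> nat) (f : point -> R) (mu : list nat -> R)
  (Hk : (0 < k)%nat) (Hl : (0 < l)%nat)
  (Hp_range : forall a, (a < k)%nat -> (p a < l)%nat)
  (Hp_surj : forall b, (b < l)%nat -> exists a, (a < k)%nat /\ p a = b)
  (Hf_cont : continuous_on_shift k f) (Hf_bow : Bow k f)
  (Hmu_inv : inv_prob k mu) (Hmu_gibbs : Gibbs k f mu)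
  (Hratio : exists A, 0 < A /\
     forall n y, inX l y ->
       exists gbar, is_lub (En_sums k p f n y) gbar /\
       forall x, inX k x ->
         (forall z, inX k z -> agree n x z -> agree n (pimap p z) y) ->
         / A <= gbar / (INR (length (preimage_words k p y n)) * fn f n x) <= A) :
  exists g : point -> R,
    continuous_on_shift l g /\ Bow l g /\
    inv_prob l (pushforward k p mu) /\ Gibbs l g (pushforward k p mu) /\
    (forall m, inv_prob l m -> Gibbs l g m -> same_measure l m (pushforward k p mu)).
Proof.
  exists (factor_potential k p f).
  assert (Hnu : inv_prob l (pushforward k p mu)) by (apply pushforward_inv_prob; auto).
  assert (Hgibbs : Gibbs l (factor_potential k p f) (pushforward k p mu))
    by (apply (pushforward_gibbs k l p Hp_surj); auto).
  split; [apply (factor_potential_continuous k l p Hp_surj); auto |].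
  split; [apply (factor_potential_bowen k l p Hp_surj); auto |].
  do 2 (split; auto).
  intros m Hm Hgm. apply (gibbs_unique l (factor_potential k p f)); auto.
Qed.
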